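(* For every $k\in\mathbb{N}$ there exists a nondeterministic parity automaton $\mathcal{A}$ with $O(k)$ states such that, for every bound $n\ge|\mathcal{A}|$ (the number of states of $\mathcal{A}$), every deterministic parity automaton $\mathcal{A}'$ with $L(\mathcal{A}')\subseteq L(\mathcal{A})$ and $L_n(L(\mathcal{A}'))=L_n(L(\mathcal{A}))$ has at least $2^k$ states.
   Context: A lasso of length $n$ over a finite alphabet $\Sigma$ is a pair $(u,v)$ with $u\in\Sigma^*$, $v\in\Sigma^+$, $|u\cdot v|=n$, inducing $u\cdot v^\omega$. For $\psi\subseteq\Sigma^\omega$, $L_n(\psi)=\{u\cdot v^\omega \in \psi \mid u\in\Sigma^*, v\in\Sigma^+, |u\cdot v|=n\}$. A nondeterministic parity automaton is $(Q,Q_0,\delta,\mu)$ with finite $Q$, $Q_0\subseteq Q$, $\delta:Q\times\Sigma\to\mathcal{P}(Q)$, coloring $\mu:Q\to C$, $C\subset\mathbb{N}$ finite. A run on $\alpha_1\alpha_2\cdots$ is $q_0q_1\cdots$ with $q_0\in Q_0$ and $q_{i+1}\in\delta(q_i,\alpha_{i+1})$; it is accepting if the highest color occurring infinitely often along it is even; $L(\cdot)$ is the set of words with an accepting run. Deterministic means $|Q_0|=1$ and $|\delta(q,\alpha)|\le1$ for all $q,\alpha$ (missing successors allowed). *)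

From mathcomp Require Import all_boot.
Set Implicit Arguments. Unset Strict Implicit. Unset Printing Implicit Defensive.

Definition oword (S : Type) := nat -> S.
Definition olang (S : Type) := oword S -> Prop.

Record NPA (S : finType) := mkNPA {
  state : finType;
  init : {set state};
  delta : state -> S -> {set state};
  color : state -> nat
}.

Definition num_states (S : finType) (A : NPA S) : nat := #|@state S A|.

(* run q0 q1 ... on alpha_1 alpha_2 ... (here w 0 = alpha_1) *)
Definition is_run (S : finType) (A : NPA S) (w : oword S) (r : nat -> state A) :=
  r 0 \in @init S A /\ forall i, r i.+1 \in @delta S A (r i) (w i).

Definition inf_often_color (S : finType) (A : NPA S) (r : nat -> state A) (c : nat) :=
  forall N, exists i, N <= i /\ @color S A (r i) = c.

Definition accepting (S : finType) (A : NPA S) (r : nat -> state A) :=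
  exists c, [/\ ~~ odd c, @inf_often_color S A r c &
                forall c', @inf_often_color S A r c' -> c' <= c].

Definition lang (S : finType) (A : NPA S) : olang S :=
  fun w => exists r, @is_run S A w r /\ @accepting S A r.

Definition deterministic (S : finType) (A : NPA S) :=
  #|@init S A| = 1 /\ forall q a, #|@delta S A q a| <= 1.

(* the word u . v^omega, where v = a :: v' is nonempty *)
Definition lasso_word (S : Type) (u : seq S) (a : S) (v' : seq S) : oword S :=
  fun i => if i < size u then nth a u i
           else nth a (a :: v') ((i - size u) %% size (a :: v')).

Definition Ln (S : Type) (n : nat) (psi : olang S) : olang S :=
  fun w => psi w /\ exists (u : seq S) (a : S) (v' : seq S),
     size u + size (a :: v') = n /\ forall i, w i = lasso_word u a v' i.

(* The automaton reads a set X of indices below k, guesses an index g in X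
   and checks that the next letter is g (or a neutral letter); this takes
   k + 3 states, and all the relevant words X g #^omega are lassos of length 3.
   A deterministic automaton agreeing with it on such lassos must, from the
   state reached after reading X, accept g exactly when g is in X, so distinct
   sets X lead to distinct states and it has at least 2^k of them. *)

From mathcomp Require Import all_boot zify.
Set Implicit Arguments. Unset Strict Implicit. Unset Printing Implicit Defensive.

Section Runs.
Variables (S : finType) (A : NPA S).

Lemma inf_often_color_eq_from (r r' : nat -> state A) m c :
  (forall i, m <= i -> r i = r' i) -> inf_often_color r c -> inf_often_color r' c.
Proof.
move=> eq_rr' r_c N; have [i [le_mN_i c_i]] := r_c (maxn m N).
exists i; split; first lia.
by rewrite -eq_rr' //; lia.
Qed.

Lemma accepting_eq_from (r r' : nat -> state A) m :
  (forall i, m <= i -> r i = r' i) -> accepting r -> accepting r'.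
Proof.
move=> eq_rr' [c [even_c r_c max_c]]; exists c; split=> //.
  exact: inf_often_color_eq_from eq_rr' r_c.
move=> c' r'_c'; apply: max_c.
by apply: inf_often_color_eq_from r'_c' => i /eq_rr'.
Qed.

Lemma accepting_const_color c (r : nat -> state A) :
  ~~ odd c -> (forall q, @color S A q = c) -> accepting r.
Proof.
move=> even_c color_c; exists c; split=> //.
  by move=> N; exists N; rewrite color_c.
by move=> c' /(_ 0) [i [_ <-]]; rewrite color_c.
Qed.

Lemma lang_replace_head (w w' : oword S) (r : nat -> state A) q :
  is_run w r -> accepting r -> q \in init A -> r 1 \in delta q (w' 0) ->
  (forall i, w' i.+1 = w i.+1) -> lang A w'.
Proof.
move=> [_ run_r] acc_r init_q r1_next eq_tail.
exists (fun i => if i is 0 then q else r i); split.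
  by split=> // -[|i] //=; rewrite eq_tail; apply: run_r.
by apply: (accepting_eq_from (m := 1)) acc_r => -[].
Qed.

Definition det_next (q : state A) (a : S) : state A :=
  odflt q [pick q' in delta q a].

Hypothesis detA : deterministic A.

Lemma det_nextE q a q' : q' \in delta q a -> det_next q a = q'.
Proof.
move=> q'_next; rewrite /det_next.
case: pickP => [q'' q''_next | /(_ q')] /=; last by rewrite q'_next.
exact: (card_le1_eqP (detA.2 q a)).
Qed.

Lemma det_init : exists q0, init A = [set q0].
Proof. by apply/cards1P; rewrite detA.1. Qed.

Lemma det_run_head q0 w (r : nat -> state A) : init A = [set q0] -> is_run w r ->
  r 0 = q0 /\ r 1 = det_next q0 (w 0).
Proof.
move=> init_q0 [r0_init run_r].
have r0 : r 0 = q0 by apply/set1P; rewrite -init_q0.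
by split=> //; rewrite (det_nextE (_ : r 1 \in delta q0 (w 0))) // -r0.
Qed.

End Runs.

Section GuessAutomaton.
Variable k : nat.

Definition letter : finType := ({set 'I_k} + option 'I_k)%type.
Definition guess_state : finType := (bool + option 'I_k)%type.

Definition admits (X : {set 'I_k}) (g : option 'I_k) : bool :=
  if g is Some i then i \in X else true.

(* In [inr g] the automaton has guessed [g], which the next letter must match;
   [inl true] is an accepting sink. *)
Definition guess_step (q : guess_state) (a : letter) (q' : guess_state) : bool :=
  match q, a, q' with
  | inl false, inl X, inr g => admits X g
  | inr g, inr b, inl true => g == b
  | inl true, _, inl true => true
  | _, _, _ => false
  end.

Definition guess_npa : NPA letter :=
  @mkNPA letter guess_state [set inl false]
    (fun q a => [set q' | guess_step q a q']) (fun _ => 0).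

Lemma card_guess_npa : num_states guess_npa = k + 3.
Proof. by rewrite /num_states /= card_sum card_bool card_option card_ord; lia. Qed.

Definition probe (X : {set 'I_k}) (b : option 'I_k) : oword letter :=
  fun i => match i with 0 => inl X | 1 => inr b | _ => inr None end.

Lemma lang_probe X b : lang guess_npa (probe X b) <-> admits X b.
Proof.
split=> [[r [[r0_init run_r] _]] | X_b].
  move: r0_init (run_r 0) (run_r 1); rewrite /= !inE => /eqP ->.
  case: (r 1) => [[] | g] //=; case: (r 2) => [[] | g'] //=.
  by move=> X_g /eqP <-.
exists (fun i => match i with 0 => inl false | 1 => inr b | _ => inl true end).
split; last by apply: (@accepting_const_color _ guess_npa 0).
split; first by rewrite inE.
by case=> [|[|i]]; rewrite /= inE.
Qed.

Lemma probe_lasso n X b : 3 <= n ->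
  exists (u : seq letter) (a : letter) (v' : seq letter),
    size u + size (a :: v') = n /\ forall i, probe X b i = lasso_word u a v' i.
Proof.
move=> le3n; exists [:: inl X, inr b & nseq (n - 3) (inr None)], (inr None), [::].
split; first by rewrite /= size_nseq; lia.
case=> [|[|i]] //; rewrite /lasso_word /= modn1.
by case: ifP => _; rewrite ?nth_nseq ?if_same.
Qed.

Lemma det_card_ge (A' : NPA letter) :
  deterministic A' -> (forall w, lang A' w -> lang guess_npa w) ->
  (forall X b, admits X b -> lang A' (probe X b)) -> 2 ^ k <= num_states A'.
Proof.
move=> detA' sub_A' probe_A'.
have [q0 init_q0] := det_init detA'.
pose F X := det_next q0 (inl X : letter).
have F_next X : F X \in delta q0 (inl X : letter).
  have [r [run_r _]] := probe_A' X None isT.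
  have [r0 r1] := det_run_head detA' init_q0 run_r.
  by move: (run_r.2 0); rewrite r0 r1.
have F_inj : injective F.
  suff F_sub X Y j : F X = F Y -> j \in X -> j \in Y.
    by move=> X Y FXY; apply/setP=> j; apply/idP/idP; apply: F_sub.
  move=> FXY X_j; have [r [run_r acc_r]] := probe_A' X (Some j) X_j.
  have [_ r1] := det_run_head detA' init_q0 run_r.
  apply/(lang_probe Y (Some j))/sub_A'.
  apply: (lang_replace_head (q := q0)) run_r acc_r _ _ _ => //.
    by rewrite init_q0 set11.
  by rewrite r1 [det_next _ _]FXY; apply: F_next.
have := leq_card F F_inj.
by rewrite /num_states -cardsT -powersetT card_powerset cardsT card_ord.
Qed.

End GuessAutomaton.

Theorem theorem7 :
  exists c : nat, forall k : nat,
    exists (S : finType) (A : NPA S),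
      num_states A <= c * k + c /\
      forall n : nat, num_states A <= n ->
        forall A' : NPA S, deterministic A' ->
          (forall w, lang A' w -> lang A w) ->
          (forall w, Ln n (lang A') w <-> Ln n (lang A) w) ->
          2 ^ k <= num_states A'.
Proof.
exists 3 => k; exists (letter k), (guess_npa k).
rewrite card_guess_npa; split=> [|n le_An A' detA' sub_A' eq_Ln]; first lia.
apply: det_card_ge => // X b X_b.
have Ln_probe : Ln n (lang (guess_npa k)) (probe X b).
  by split; [apply/lang_probe | apply: probe_lasso; lia].
by have [] := (eq_Ln _).2 Ln_probe.
Qed.
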